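(* For all even integers $a, b \ge 2$, $R_\mathrm{ord}(M_a^\mathrm{nest}, M_b^\mathrm{nest}) = a + b - 2$.
   Context: All graphs are finite, simple and undirected, and a graph of order $n$ has vertex set $\{0,1,\ldots,n-1\}$; $K_n$ is the complete graph on $\{0,\ldots,n-1\}$. A $2$-edge-coloring of $K_n$ assigns each edge a color in $\{1,2\}$. For a graph $H$ and such a coloring, an embedding of $H$ in color $j$ is an injective map $\varphi\colon V(H)\to V(K_n)$ such that for every edge $uv$ of $H$ the edge $\{\varphi(u),\varphi(v)\}$ has color $j$; it is increasing if $\varphi(0)<\cdots<\varphi(|H|-1)$. The ordered Ramsey number $R_\mathrm{ord}(H_1,H_2)$ is the smallest $n$ such that every $2$-edge-coloring of $K_n$ admits an increasing embedding of $H_1$ in color $1$ or an increasing embedding of $H_2$ in color $2$. For even $n\ge2$, the nested matching $M_n^\mathrm{nest}$ is the graph of order $n$ whose edges are exactly $\{v, n-1-v\}$ for $0\le v\le n/2-1$. *)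

From mathcomp Require Import all_boot.
Set Implicit Arguments. Unset Strict Implicit. Unset Printing Implicit Defensive.

Definition graph (m : nat) := rel 'I_m.

(* A 2-edge-colouring of K_n: every pair (x,y) is given a colour in bool,
   true = colour 1, false = colour 2.  The colour of the unordered edge {x,y}
   (x <> y) is read off the ordered pair (min, max); values on other pairs
   are irrelevant, so quantifying over all such functions is the same as
   quantifying over all 2-edge-colourings of K_n. *)
Definition coloring (n : nat) := 'I_n -> 'I_n -> bool.

Definition edge_color n (c : coloring n) (x y : 'I_n) : bool :=
  if x < y then c x y else c y x.

Definition inc_embedding m (H : graph m) n (c : coloring n) (j : bool) : Prop :=
  exists f : 'I_m -> 'I_n,
    (forall u v : 'I_m, u < v -> f u < f v) /\
    (forall u v : 'I_m, H u v -> edge_color c (f u) (f v) = j).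

Definition ord_ramsey_prop m1 (H1 : graph m1) m2 (H2 : graph m2) (n : nat) : Prop :=
  forall c : coloring n, inc_embedding H1 c true \/ inc_embedding H2 c false.

Definition is_ord_ramsey_number m1 (H1 : graph m1) m2 (H2 : graph m2) (r : nat) : Prop :=
  ord_ramsey_prop H1 H2 r /\ (forall n, ord_ramsey_prop H1 H2 n -> r <= n).

Definition nested_matching (m : nat) : graph m :=
  fun u v => ((u < m./2) && (val v == m.-1 - u)) || ((v < m./2) && (val u == m.-1 - v)).
Arguments nested_matching m : clear implicits.

From mathcomp Require Import all_boot zify.

Set Implicit Arguments.
Unset Strict Implicit.
Unset Printing Implicit Defensive.

(* Upper bound: the pairs {i, n-1-i}, i < n/2, are n/2 pairwise nested rungs, and any k
   rungs of one colour form an increasing copy of M_2k in that colour.  For n = a+b-2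
   there are a/2 + b/2 - 1 rungs, so by pigeonhole a/2 of them have colour 1 or b/2 of
   them have colour 2.
   Lower bound: on n < a+b-2 vertices, give colour 1 exactly to the edges of length at
   most a-2.  The outer edge of an increasing M_a has length at least a-1, and an
   increasing M_b in colour 2 has its innermost edge of length at least a-1 with b/2-1
   vertices on either side, which needs a+b-2 vertices. *)

Lemma nested_matchingE p (u v : 'I_(2 * p)) :
  nested_matching (2 * p) u v = (u + v == (2 * p).-1).
Proof.
rewrite /nested_matching (_ : (2 * p)./2 = p); last by rewrite mul2n doubleK.
have := ltn_ord u; have := ltn_ord v => lt_v lt_u.
apply/idP/eqP => [|huv]; first by case/orP => /andP[_ /eqP /= ->]; lia.
by case: (ltnP u p) => hu; apply/orP; [left | right]; apply/andP; split;
  try apply/eqP => /=; lia.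
Qed.

Lemma edge_colorC n (c : coloring n) (x y : 'I_n) :
  edge_color c x y = edge_color c y x.
Proof.
rewrite /edge_color; case: ltngtP => // exy.
by rewrite (val_inj exy).
Qed.

Lemma inc_ord_gap m n (f : 'I_m -> 'I_n) :
  (forall u v : 'I_m, u < v -> f u < f v) ->
  forall u v : 'I_m, u <= v -> f u + (v - u) <= f v.
Proof.
move=> f_inc u [v]; elim: v => [|v IH] lt_v /= le_uv.
  have -> : u = Ordinal lt_v by apply: val_inj => /=; lia.
  by rewrite addn0.
case: (ltngtP u v.+1) le_uv => // [lt_uv _ | e_uv _].
  have := IH (ltnW lt_v) lt_uv; have := f_inc (Ordinal (ltnW lt_v)) (Ordinal lt_v).
  by rewrite /=; lia.
have -> : u = Ordinal lt_v by apply: val_inj; exact: e_uv.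
by rewrite subnn addn0.
Qed.

Section RungEmbedding.

Variables (n : nat) (c : coloring n) (j : bool) (s : seq nat) (k : nat).
Hypotheses (s_sorted : sorted ltn s) (k_le_s : k <= size s).
Hypothesis s_half : {in s, forall i, i < n./2}.
Hypothesis s_color : forall x : 'I_n, val x \in s -> edge_color c x (rev_ord x) = j.

Let rung_end (u : nat) : nat :=
  if u < k then nth 0 s u else n.-1 - nth 0 s ((2 * k).-1 - u).

Let nth_half t : t < k -> nth 0 s t < n./2.
Proof. by move=> lt_tk; apply/s_half/mem_nth; apply: leq_trans k_le_s. Qed.

Let nth_inc t t' : t < t' -> t' < k -> nth 0 s t < nth 0 s t'.
Proof.
move=> lt_tt' lt_t'k.
by apply: (sorted_ltn_nth ltn_trans) => //; rewrite inE; lia.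
Qed.

Let rung_end_lt (u : 'I_(2 * k)) : rung_end u < n.
Proof.
have := ltn_ord u; rewrite /rung_end; case: ifP => hu lt_u.
  by have := nth_half hu; lia.
by have := nth_half (t := 0) ltac:(lia); lia.
Qed.

Lemma nested_matching_from_rungs : inc_embedding (nested_matching (2 * k)) c j.
Proof.
exists (fun u => Ordinal (rung_end_lt u)); split.
  move=> u v lt_uv /=; have := ltn_ord u; have := ltn_ord v; rewrite /rung_end.
  case: (ltnP u k) => hu; case: (ltnP v k) => hv lt_v lt_u; first exact: nth_inc.
  - by have := nth_half hu; have := nth_half (t := (2 * k).-1 - v) ltac:(lia); lia.
  - lia.
  - have := nth_inc (t := (2 * k).-1 - v) (t' := (2 * k).-1 - u) ltac:(lia) ltac:(lia).
    by have := nth_half (t := (2 * k).-1 - u) ltac:(lia); lia.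
have key (u v : 'I_(2 * k)) : u < k -> u + v = (2 * k).-1 ->
    edge_color c (Ordinal (rung_end_lt u)) (Ordinal (rung_end_lt v)) = j.
  move=> hu huv; have hv : k <= v by lia.
  have -> : Ordinal (rung_end_lt v) = rev_ord (Ordinal (rung_end_lt u)).
    apply: val_inj; rewrite /= /rung_end hu ltnNge hv /=.
    by rewrite (_ : (2 * k).-1 - v = u); lia.
  by apply: s_color; rewrite /= /rung_end hu; apply/mem_nth/(leq_trans hu).
move=> u v; rewrite nested_matchingE => /eqP huv.
case: (ltnP u k) => hu; first exact: key.
by rewrite edge_colorC; apply: key; have := ltn_ord u; lia.
Qed.

End RungEmbedding.

Lemma leq_half n : n./2 <= n.
Proof. by rewrite -{2}(odd_double_half n) -addnn addnA leq_addl. Qed.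

Definition rung_color n (c : coloring n) (i : 'I_(n./2)) : bool :=
  let x := widen_ord (leq_half n) i in edge_color c x (rev_ord x).

Lemma nested_matching_from_colored_rungs n (c : coloring n) j (P : {pred 'I_(n./2)}) k :
  {in P, forall i, rung_color c i = j} -> k <= #|P| ->
  inc_embedding (nested_matching (2 * k)) c j.
Proof.
move=> P_color k_le_P.
apply: (nested_matching_from_rungs (s := [seq val i | i <- enum P])).
- apply: (subseq_sorted ltn_trans (s2 := [seq val i | i <- enum 'I_(n./2)])).
    by apply: map_subseq; rewrite enumT /enum_mem filter_subseq.
  by rewrite val_enum_ord iota_ltn_sorted.
- by rewrite size_map -cardE.
- by move=> _ /mapP[i _ ->]; apply: ltn_ord.
- move=> x /mapP[i]; rewrite mem_enum => Pi e_xi.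
  have -> : x = widen_ord (leq_half n) i by apply: val_inj.
  exact: P_color.
Qed.

Lemma ord_ramsey_nested_upper p q n : p + q <= (n./2).+1 ->
  ord_ramsey_prop (nested_matching (2 * p)) (nested_matching (2 * q)) n.
Proof.
move=> pq_le c; pose A : {pred 'I_(n./2)} := rung_color c.
pose B : {pred 'I_(n./2)} := [predC A].
have card_split : #|A| + #|B| = n./2 by rewrite -[RHS]card_ord; exact: cardC.
case: (leqP p #|A|) => [le_p | lt_p]; [left | right].
  by apply: nested_matching_from_colored_rungs le_p.
apply: (nested_matching_from_colored_rungs (P := B)); last by lia.
by move=> i /negbTE.
Qed.

Definition length_coloring n d : coloring n := fun x y => y - x <= d.
Arguments length_coloring : clear implicits.

Lemma no_short_nested_matching n d p : 0 < p -> d < (2 * p).-1 ->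
  ~ inc_embedding (nested_matching (2 * p)) (length_coloring n d) true.
Proof.
move=> p_gt0 lt_d [f [f_inc f_col]].
have lt_lo : 0 < 2 * p by lia.
have lt_hi : (2 * p).-1 < 2 * p by lia.
pose lo := Ordinal lt_lo; pose hi := Ordinal lt_hi.
have lt_f : f lo < f hi by apply: f_inc => /=; lia.
have := f_col lo hi; rewrite nested_matchingE /edge_color lt_f /length_coloring /=.
have := inc_ord_gap f_inc (u := lo) (v := hi); rewrite /=; lia.
Qed.

Lemma no_long_nested_matching n d q : 0 < q -> n < 2 * q + d ->
  ~ inc_embedding (nested_matching (2 * q)) (length_coloring n d) false.
Proof.
move=> q_gt0 lt_n [f [f_inc f_col]].
have lt_lo : 0 < 2 * q by lia.
have lt_mid1 : q.-1 < 2 * q by lia.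
have lt_mid2 : q < 2 * q by lia.
have lt_hi : (2 * q).-1 < 2 * q by lia.
pose lo := Ordinal lt_lo; pose mid1 := Ordinal lt_mid1.
pose mid2 := Ordinal lt_mid2; pose hi := Ordinal lt_hi.
have lt_f : f mid1 < f mid2 by apply: f_inc => /=; lia.
have := f_col mid1 mid2; rewrite nested_matchingE /edge_color lt_f /length_coloring /=.
have := inc_ord_gap f_inc (u := lo) (v := mid1).
have := inc_ord_gap f_inc (u := mid2) (v := hi).
have := ltn_ord (f hi); rewrite /=; lia.
Qed.

Lemma ord_ramsey_nested_lower p q n : 0 < p -> 0 < q -> n < 2 * p + 2 * q - 2 ->
  ~ ord_ramsey_prop (nested_matching (2 * p)) (nested_matching (2 * q)) n.
Proof.
move=> p_gt0 q_gt0 lt_n /(_ (length_coloring n (2 * p - 2))) [].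
  by apply: no_short_nested_matching; lia.
by apply: no_long_nested_matching; lia.
Qed.

Lemma ord_ramsey_nested_even p q : 0 < p -> 0 < q ->
  is_ord_ramsey_number (nested_matching (2 * p)) (nested_matching (2 * q))
    (2 * p + 2 * q - 2).
Proof.
move=> p_gt0 q_gt0; split.
  apply: ord_ramsey_nested_upper.
  by rewrite (_ : 2 * p + 2 * q - 2 = 2 * (p + q).-1) ?mul2n ?doubleK; lia.
move=> n ramsey_n; rewrite leqNgt; apply/negP => lt_n.
exact: ord_ramsey_nested_lower lt_n ramsey_n.
Qed.

Theorem theorem4p27 (a b : nat) :
  ~~ odd a -> 2 <= a -> ~~ odd b -> 2 <= b ->
  is_ord_ramsey_number (nested_matching a) (nested_matching b) (a + b - 2).
Proof.
move=> a_even a_ge2 b_even b_ge2.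
have := @ord_ramsey_nested_even a./2 b./2.
by rewrite !mul2n !even_halfK //; apply; rewrite half_gt0.
Qed.
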